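(* Let $U$ be the $4\times 15$ matrix over $\mathbb{F}_2$ whose columns are all $15$ nonzero vectors of $\mathbb{F}_2^4$, let $B_1=I_4$ and $B_2=\operatorname{diag}\!\left(\begin{bmatrix}0&1\\1&0\end{bmatrix},\begin{bmatrix}0&1\\1&0\end{bmatrix}\right)$, and let $F2R4A=\Gamma(U^tB_1U)$ and $F2R4B=\Gamma(U^tB_2U)$. Then a simple graph $G$ satisfies $\operatorname{mr}(\mathbb{F}_2,G)\le4$ if and only if $G$ is a blowup of $F2R4A\cup K_1$ or of $F2R4B\cup K_1$, where $K_1$ is a single isolated nonlooped vertex.
   Context: For a symmetric $n\times n$ matrix $A$, the looped graph corresponding to $A$, $\Gamma(A)$, has vertex set $\{1,\dots,n\}$, an edge $ij$ ($i\neq j$) iff $a_{ij}\neq0$, and a loop at $i$ iff $a_{ii}\ne 0$. For a simple graph $G$, $\operatorname{mr}(F,G)$ is the minimum rank of a symmetric matrix $A$ over $F$ with $a_{ij}\neq0$ for $i\ne j$ iff $ij$ is an edge of $G$ (diagonal unrestricted). A blowup of a looped graph $G$ with vertices $v_1,\dots,v_n$ is a simple graph obtained by replacing each nonlooped vertex $v_i$ by a (possibly empty) independent set $V_i$, each looped vertex $v_i$ by a (possibly empty) clique $V_i$, and each edge $v_iv_j$ ($i\ne j$) by all edges $xy$ with $x\in V_i$, $y\in V_j$. *)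

From HB Require Import structures.
From mathcomp Require Import all_boot all_order all_algebra.
Set Implicit Arguments. Unset Strict Implicit. Unset Printing Implicit Defensive.
Import Order.TTheory GRing.Theory Num.Theory.
Local Open Scope ring_scope.

(* A simple graph on 'I_n is a symmetric irreflexive relation g.
   A looped graph on a vertex type V is a symmetric relation h; h v v means
   there is a loop at v. *)

Definition fits (F : finFieldType) (n : nat) (g : rel 'I_n) (A : 'M[F]_n) : bool :=
  (A^T == A) && [forall i : 'I_n, forall j : 'I_n, (i != j) ==> ((A i j != 0) == g i j)].

(* minimum rank mr(F,G); the default n is never attained below since
   every simple graph has a fitting matrix of rank <= n. *)
Definition mr (F : finFieldType) (n : nat) (g : rel 'I_n) : nat :=
  \big[minn/n]_(A : 'M[F]_n | fits g A) \rank A.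

Definition Gamma (F : fieldType) (m : nat) (A : 'M[F]_m) : rel 'I_m :=
  fun i j => A i j != 0.

(* G (simple graph on 'I_n) is a blowup of the looped graph h on V:
   vertex x of G lies in part V_(f x). *)
Definition blowup (V : Type) (h : rel V) (n : nat) (g : rel 'I_n) : Prop :=
  exists f : 'I_n -> V, forall x y : 'I_n, x != y -> g x y = h (f x) (f y).

(* disjoint union with K_1, a single isolated nonlooped vertex (None) *)
Definition withK1 (V : Type) (h : rel V) : rel (option V) :=
  fun x y => match x, y with Some a, Some b => h a b | _, _ => false end.

(* U : columns are all 15 nonzero vectors of F_2^4; column j is the binary
   expansion of j+1 (row i = bit i). *)
Definition Umx : 'M['F_2]_(4, 15) :=
  \matrix_(i < 4, j < 15) (odd ((j.+1) %/ 2 ^ i))%:R.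

Definition B1 : 'M['F_2]_4 := 1%:M.

(* B2 = diag([[0,1],[1,0]], [[0,1],[1,0]]) *)
Definition B2 : 'M['F_2]_4 :=
  \matrix_(i < 4, j < 4) ((i != j :> nat) && (i %/ 2 == j %/ 2)%N)%:R.

Definition F2R4A : rel 'I_15 := Gamma (Umx^T *m B1 *m Umx).
Definition F2R4B : rel 'I_15 := Gamma (Umx^T *m B2 *m Umx).

From HB Require Import structures.
From mathcomp Require Import all_boot all_order all_algebra.
Set Implicit Arguments. Unset Strict Implicit. Unset Printing Implicit Defensive.
Import GRing.Theory.

(* 1. (General, over any finite field.) mr(F,G) <= r iff G is a "Gram graph"
      of some symmetric r x r matrix M: there are row vectors p_x with
      x ~ y <-> p_x M p_y^T <> 0 for x <> y.  One direction takes the rows of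
      C in a factorization A = C M C^T of an optimal fitting matrix A (every
      symmetric matrix of rank <= r has one); the other takes A = C M C^T.
   2. (Finite computation.) Every symmetric bilinear form on F_2^4 is the
      pullback of B1 or B2 along some map F_2^4 -> F_2^4.  This is checked on
      a bit-level model of F_2^4 by a certificate search over all 2^10 forms
      and transported to 'F_2 matrices.
   3. The 15 columns of U are exactly the nonzero vectors of F_2^4, and the
      zero vector is orthogonal to everything; hence G is a blowup of
      Gamma(U^T B U) u K_1 iff G is a Gram graph of B. *)

Section GramGraphs.
Local Open Scope ring_scope.

Definition gram_graph (F : fieldType) (r n : nat) (M : 'M[F]_r) (g : rel 'I_n) : Prop :=
  exists P : 'I_n -> 'rV[F]_r,
    forall x y, x != y -> g x y = ((P x *m M *m (P y)^T) 0 0 != 0).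

Lemma gram_entry (R : pzRingType) (m n r : nat) (X : 'M[R]_(m, r)) (M : 'M[R]_r)
    (Y : 'M[R]_(n, r)) (i : 'I_m) (j : 'I_n) :
  (X *m M *m Y^T) i j = (row i X *m M *m (row j Y)^T) 0 0.
Proof.
rewrite !mxE; apply: eq_bigr => k _; rewrite !mxE; congr (_ * _).
by apply: eq_bigr => l _; rewrite !mxE.
Qed.

Lemma bigmin_le (I : finType) (P : pred I) (F : I -> nat) (k : nat) (i0 : I) :
  P i0 -> (\big[minn/k]_(i | P i) F i <= F i0)%N.
Proof.
move=> Pi0; rewrite unlock; elim: (index_enum I) (mem_index_enum i0) => //= i s IHs.
rewrite inE => /predU1P[<-|/IHs le_i0]; first by rewrite Pi0 geq_minl.
by case: (P i) => //; exact: leq_trans (geq_minr _ _) le_i0.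
Qed.

Lemma mr_le (F : finFieldType) (n : nat) (g : rel 'I_n) (A : 'M[F]_n) :
  fits g A -> (mr F g <= \rank A)%N.
Proof. exact: bigmin_le. Qed.

(* The minimum rank is attained; the default value n is covered by the
   adjacency matrix, which fits g when g is symmetric. *)
Lemma mr_witness (F : finFieldType) (n : nat) (g : rel 'I_n) : symmetric g ->
  exists2 A : 'M[F]_n, fits g A & (\rank A <= mr F g)%N.
Proof.
move=> g_sym; rewrite /mr.
apply: (big_ind (fun m => exists2 A : 'M[F]_n, fits g A & (\rank A <= m)%N)).
- exists (\matrix_(i, j) (g i j)%:R); last exact: rank_leq_row.
  apply/andP; split; first by apply/eqP/matrixP => i j; rewrite !mxE g_sym.
  apply/forallP => i; apply/forallP => j; apply/implyP => _.
  by rewrite mxE; case: (g i j); rewrite ?oner_neq0 ?eqxx.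
- move=> m1 m2 [A1 fA1 rA1] [A2 fA2 rA2]; case: (leqP m1 m2) => [le12 | lt21].
  + by exists A1; rewrite ?(minn_idPl le12).
  + by exists A2; rewrite ?(minn_idPr (ltnW lt21)).
- by move=> A fA; exists A.
Qed.

Lemma rank_projector (F : fieldType) (n r : nat) (A : 'M[F]_n) : (\rank A <= r)%N ->
  exists (X : 'M[F]_(n, r)) (Z : 'M[F]_(r, n)), X *m Z *m A = A.
Proof.
move=> rA; set L := col_ebase A.
exists (L *m pid_mx r), (pid_mx r *m invmx L).
rewrite -(mulmx_ebase A) -/L -!mulmxA mulKmx ?col_ebase_unit //; congr (L *m _).
by rewrite !mulmxA !mul_pid_mx !minnn (minn_idPr rA) (minn_idPr (rank_leq_row A)).
Qed.

Lemma sym_rank_factor (F : fieldType) (n r : nat) (A : 'M[F]_n) :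
  A^T = A -> (\rank A <= r)%N ->
  exists (C : 'M[F]_(n, r)) (M : 'M[F]_r), M^T = M /\ A = C *m M *m C^T.
Proof.
move=> AT /rank_projector [X [Z XZA]].
exists X, (Z *m A *m Z^T); split; first by rewrite !trmx_mul trmxK AT mulmxA.
have AZX : A = A *m Z^T *m X^T by rewrite -{1}AT -{1}XZA !trmx_mul AT mulmxA.
by rewrite -{1}XZA {1}AZX !mulmxA.
Qed.

Lemma mr_le_gram (F : finFieldType) (r n : nat) (g : rel 'I_n) : symmetric g ->
  (mr F g <= r)%N <-> exists2 M : 'M[F]_r, M^T = M & gram_graph M g.
Proof.
move=> g_sym; split=> [le_mr_r | [M MT [P gP]]].
- have [A /andP[/eqP AT /forallP fitA] rA] := mr_witness F g_sym.
  have [C [M [MT defA]]] := sym_rank_factor AT (leq_trans rA le_mr_r).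
  exists M => //; exists (fun x => row x C) => x y neq_xy.
  have /forallP/(_ y) := fitA x; rewrite neq_xy /= => /eqP <-.
  by rewrite defA gram_entry.
- pose C : 'M[F]_(n, r) := \matrix_x P x.
  have fitA : fits g (C *m M *m C^T).
    apply/andP; split; first by rewrite !trmx_mul trmxK MT mulmxA.
    apply/forallP => x; apply/forallP => y; apply/implyP => /gP ->.
    by rewrite gram_entry !rowK.
  apply: leq_trans (mr_le fitA) _.
  exact: leq_trans (mxrankM_maxl _ _) (leq_trans (mxrankM_maxl _ _) (rank_leq_col _)).
Qed.

End GramGraphs.

Section BitModel.

(* F_2^4 as quadruples of bits, and bilinear forms given by bit matrices
   m : nat -> nat -> bool (only the entries below 4 matter). *)
Definition bvec := (bool * bool * bool * bool)%type.

Definition coord (p : bvec) (i : nat) : bool :=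
  let: (a, b, c, d) := p in match i with 0 => a | 1 => b | 2 => c | _ => d end.

Definition bvzero : bvec := (false, false, false, false).

Definition bvadd (p q : bvec) : bvec :=
  let: (a, b, c, d) := p in let: (a', b', c', d') := q in
  (a (+) a', b (+) b', c (+) c', d (+) d').

Definition all_bvec : seq bvec :=
  let pairs := [seq (x, y) | x <- [:: false; true], y <- [:: false; true]] in
  [seq (ab.1, ab.2, cd.1, cd.2) | ab <- pairs, cd <- pairs].

Lemma mem_all_bvec (p : bvec) : p \in all_bvec.
Proof. by case: p => [[[[] []] []] []]. Qed.

Definition sum4 (f : nat -> nat) : nat := f 0 + f 1 + f 2 + f 3.

Definition bform (m : nat -> nat -> bool) (p q : bvec) : bool :=
  odd (sum4 (fun j => sum4 (fun i => coord p i * m i j * coord q j))).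

Lemma bform_ext (m m' : nat -> nat -> bool) (p q : bvec) :
  (forall i j, i < 4 -> j < 4 -> m i j = m' i j) -> bform m p q = bform m' p q.
Proof. by move=> mm'; rewrite /bform /sum4 !mm'. Qed.

Definition sym4 (b00 b01 b02 b03 b11 b12 b13 b22 b23 b33 : bool) (i j : nat) : bool :=
  match i, j with
  | 0, 0 => b00 | 0, 1 | 1, 0 => b01 | 0, 2 | 2, 0 => b02 | 0, 3 | 3, 0 => b03
  | 1, 1 => b11 | 1, 2 | 2, 1 => b12 | 1, 3 | 3, 1 => b13
  | 2, 2 => b22 | 2, 3 | 3, 2 => b23 | _, _ => b33
  end.

(* The bit patterns of B1 (b = true) and B2 (b = false). *)
Definition bB (b : bool) : nat -> nat -> bool :=
  if b then sym4 true false false false true false false true false true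
  else sym4 false true false false false false false false true false.

Definition lin (l : seq bvec) (p : bvec) : bvec :=
  foldr bvadd bvzero [seq if coord p i then nth bvzero l i else bvzero | i <- iota 0 4].

(* Certificate search: choose images l_0, l_1, ... of the unit vectors one at
   a time, keeping B(l_i, l_k) = m i k for all i <= k. *)
Definition gram_ext (m B : nat -> nat -> bool) (l : seq bvec) (p : bvec) : bool :=
  let k := size l in
  (bform B p p == m k k) &&
  all (fun i => bform B (nth bvzero l i) p == m i k) (iota 0 k).

Fixpoint find_some (A B : Type) (f : A -> option B) (s : seq A) : option B :=
  if s is x :: s' then (if f x is Some y then Some y else find_some f s') else None.

Fixpoint extend (ok : seq bvec -> bvec -> bool) (k : nat) (l : seq bvec) :
    option (seq bvec) :=
  if k is k'.+1 then
    find_some (fun p => if ok l p then extend ok k' (rcons l p) else None) all_bvec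
  else Some l.

(* The found map is checked directly on all pairs, so the search itself
   needs no correctness proof. *)
Definition represents (m B : nat -> nat -> bool) (phi : bvec -> bvec) : bool :=
  all (fun p => all (fun q => bform m p q == bform B (phi p) (phi q)) all_bvec) all_bvec.

Definition certified_by (m B : nat -> nat -> bool) : bool :=
  if extend (gram_ext m B) 4 [::] is Some l then represents m B (lin l) else false.

Lemma certified_byP (m B : nat -> nat -> bool) : certified_by m B ->
  exists psi : bvec -> bvec, forall p q, bform m p q = bform B (psi p) (psi q).
Proof.
rewrite /certified_by; case: extend => // l /allP reprl; exists (lin l) => p q.
by have /allP/(_ q (mem_all_bvec q))/eqP := reprl p (mem_all_bvec p).
Qed.

Definition allb (P : bool -> bool) : bool := P false && P true.

Lemma allbP (P : bool -> bool) : allb P -> forall b, P b.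
Proof. by case/andP=> ? ? []. Qed.

Definition all_sym_certified : bool :=
  allb (fun b00 => allb (fun b01 => allb (fun b02 => allb (fun b03 => allb (fun b11 =>
  allb (fun b12 => allb (fun b13 => allb (fun b22 => allb (fun b23 => allb (fun b33 =>
  let m := sym4 b00 b01 b02 b03 b11 b12 b13 b22 b23 b33 in
  certified_by m (bB true) || certified_by m (bB false))))))))))).

Lemma all_sym_certifiedE : all_sym_certified.
Proof. by vm_compute. Qed.

Lemma bit_sym_forms (m : nat -> nat -> bool) : (forall i j, m i j = m j i) ->
  exists b, exists psi : bvec -> bvec,
    forall p q, bform m p q = bform (bB b) (psi p) (psi q).
Proof.
move=> m_sym.
pose s := sym4 (m 0 0) (m 0 1) (m 0 2) (m 0 3) (m 1 1) (m 1 2) (m 1 3) (m 2 2) (m 2 3) (m 3 3).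
have m_s p q : bform m p q = bform s p q.
  apply: bform_ext => i j.
  by case: i => [|[|[|[|i]]]] //; case: j => [|[|[|[|j]]]] //= _ _; rewrite m_sym.
have := all_sym_certifiedE.
move=> /allbP/(_ (m 0 0))/allbP/(_ (m 0 1))/allbP/(_ (m 0 2))/allbP/(_ (m 0 3)).
move=> /allbP/(_ (m 1 1))/allbP/(_ (m 1 2))/allbP/(_ (m 1 3))/allbP/(_ (m 2 2)).
move=> /allbP/(_ (m 2 3))/allbP/(_ (m 3 3))/orP.
by case=> /certified_byP [psi repr]; [exists true | exists false];
  exists psi => p q; rewrite m_s repr.
Qed.

End BitModel.

Local Open Scope ring_scope.

Definition bit (x : 'F_2) : bool := x != 0.

Lemma bit_natr (k : nat) : bit k%:R = odd k.
Proof. by rewrite /bit -(@Fp_nat_mod 2) // modn2; case: (odd k). Qed.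

Lemma bitK : cancel bit (fun b : bool => b%:R : 'F_2).
Proof. by case=> [[|[|k]] lt_k2] //; apply: val_inj. Qed.

Lemma bit_inj : injective bit.
Proof. exact: can_inj bitK. Qed.

Definition bits (u : 'rV['F_2]_4) : bvec :=
  (bit (u 0 (inord 0)), bit (u 0 (inord 1)), bit (u 0 (inord 2)), bit (u 0 (inord 3))).

Lemma coord_bits (u : 'rV['F_2]_4) (i : 'I_4) : coord (bits u) i = bit (u 0 i).
Proof.
by case: i => [[|[|[|[|k]]]] lt_i4] //=; congr (bit (u 0 _)); apply: val_inj; rewrite /= inordK.
Qed.

Definition vec_of_bits (p : bvec) : 'rV['F_2]_4 := \row_i (coord p i)%:R.

Lemma vec_of_bitsK : cancel bits vec_of_bits.
Proof. by move=> u; apply/rowP => i; rewrite mxE coord_bits bitK. Qed.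

Lemma bits_vec_of_bits (p : bvec) : bits (vec_of_bits p) = p.
Proof. by case: p => [[[a b] c] d]; rewrite /bits !mxE !bit_natr !inordK //= !oddb. Qed.

Definition mbits (M : 'M['F_2]_4) (i j : nat) : bool := bit (M (inord i) (inord j)).

Lemma big_ord4 (F : 'I_4 -> nat) :
  (\sum_(i < 4) F i = F (inord 0) + F (inord 1) + F (inord 2) + F (inord 3))%N.
Proof.
rewrite !big_ord_recl big_ord0 addn0 !addnA.
by congr (F _ + F _ + F _ + F _)%N; apply: val_inj; rewrite /= inordK.
Qed.

Lemma bit_form (M : 'M['F_2]_4) (u v : 'rV['F_2]_4) :
  bit ((u *m M *m v^T) 0 0) = bform (mbits M) (bits u) (bits v).
Proof.
rewrite mxE.
under eq_bigr => j _ do rewrite !mxE mulr_suml.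
under eq_bigr => j _ do under eq_bigr => i _ do
  rewrite -[u 0 i]bitK -[M i j]bitK -[v 0 j]bitK -!natrM.
under eq_bigr => j _ do rewrite -natr_sum.
by rewrite -natr_sum bit_natr !big_ord4.
Qed.

Definition Bmat (b : bool) : 'M['F_2]_4 := if b then B1 else B2.

Lemma Bmat_sym (b : bool) : (Bmat b)^T = Bmat b.
Proof.
case: b; first by rewrite /= /B1 tr_scalar_mx.
by apply/matrixP => i j; rewrite !mxE eq_sym [(j %/ 2 == _)%N]eq_sym.
Qed.

Lemma mbits_Bmat (b : bool) (i j : nat) : (i < 4)%N -> (j < 4)%N ->
  mbits (Bmat b) i j = bB b i j.
Proof.
move=> lt_i4 lt_j4; rewrite /mbits; case: b; rewrite /= ?/B1 ?/B2 !mxE bit_natr oddb;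
  rewrite -?val_eqE /= !inordK //;
  by case: i lt_i4 => [|[|[|[|i]]]] //; case: j lt_j4 => [|[|[|[|j]]]].
Qed.

Lemma sym_form_reduction (M : 'M['F_2]_4) : M^T = M ->
  exists b, exists phi : 'rV['F_2]_4 -> 'rV['F_2]_4, forall u v,
    (u *m M *m v^T) 0 0 = (phi u *m Bmat b *m (phi v)^T) 0 0.
Proof.
move=> MT; have mbits_sym i j : mbits M i j = mbits M j i.
  by rewrite /mbits -{1}MT mxE.
have [b [psi repr]] := bit_sym_forms mbits_sym.
exists b, (vec_of_bits \o psi \o bits) => u v; apply: bit_inj.
rewrite !bit_form /= !bits_vec_of_bits repr.
by apply: bform_ext => i j lt_i4 lt_j4; rewrite mbits_Bmat.
Qed.

Definition ucol (j : 'I_15) : 'rV['F_2]_4 := row j Umx^T.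

Definition nat_bits (k : nat) : bvec :=
  (odd (k %/ 2 ^ 0), odd (k %/ 2 ^ 1), odd (k %/ 2 ^ 2), odd (k %/ 2 ^ 3)).

Lemma bits_ucol (j : 'I_15) : bits (ucol j) = nat_bits j.+1.
Proof. by rewrite /bits /ucol !mxE !bit_natr !oddb !inordK. Qed.

(* The column of U carrying a nonzero bit vector (as its binary value minus
   one; the reduction mod 15 only serves to build the ordinal). *)
Definition bindex (p : bvec) : option 'I_15 :=
  let: (a, b, c, d) := p in
  if (a + 2 * b + 4 * c + 8 * d)%N is k.+1 then Some (Ordinal (@ltn_pmod k 15 isT))
  else None.

Lemma bindexP (p : bvec) :
  if bindex p is Some j then nat_bits j.+1 = p else p = bvzero.
Proof. by case: p => [[[[] []] []] []]; vm_compute. Qed.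

Definition ovec (a : option 'I_15) : 'rV['F_2]_4 :=
  if a is Some j then ucol j else 0.

Definition vindex (u : 'rV['F_2]_4) : option 'I_15 := bindex (bits u).

Lemma vindexK : cancel vindex ovec.
Proof.
move=> u; apply: (can_inj vec_of_bitsK); rewrite /vindex.
case: bindex (bindexP (bits u)) => [j <-|] /=; first exact: bits_ucol.
by move->; rewrite /bits !mxE.
Qed.

Lemma withK1_Gamma (B : 'M['F_2]_4) (a b : option 'I_15) :
  withK1 (Gamma (Umx^T *m B *m Umx)) a b = bit ((ovec a *m B *m (ovec b)^T) 0 0).
Proof.
case: a => [j|]; case: b => [k|] /=.
- by rewrite /Gamma /ucol -gram_entry trmxK.
- by rewrite trmx0 mulmx0 mxE.
- by rewrite !mul0mx mxE.
- by rewrite !mul0mx mxE.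
Qed.

Lemma blowup_gram_graph (B : 'M['F_2]_4) (n : nat) (g : rel 'I_n) :
  blowup (withK1 (Gamma (Umx^T *m B *m Umx))) g <-> gram_graph B g.
Proof.
split=> [[f gf] | [P gP]].
- by exists (ovec \o f) => x y /gf ->; rewrite withK1_Gamma.
- by exists (vindex \o P) => x y /gP ->; rewrite /= withK1_Gamma !vindexK.
Qed.

Theorem mainTheorem20 (n : nat) (g : rel 'I_n)
  (g_sym : symmetric g) (g_irr : irreflexive g) :
  (@mr 'F_2 n g <= 4)%N <->
  (blowup (withK1 F2R4A) g \/ blowup (withK1 F2R4B) g).
Proof.
have blowupE b : blowup (withK1 (Gamma (Umx^T *m Bmat b *m Umx))) g <-> gram_graph (Bmat b) g.
  exact: blowup_gram_graph.
apply: (iff_trans (mr_le_gram _ _ g_sym)).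
split=> [[M MT [P gP]] | blowup_g].
- have [b [phi phiE]] := sym_form_reduction MT.
  have /blowupE blowup_b : gram_graph (Bmat b) g.
    by exists (phi \o P) => x y /gP ->; rewrite phiE.
  by clear phiE; case: b blowup_b; [left | right].
- have [b blowup_b] : exists b, blowup (withK1 (Gamma (Umx^T *m Bmat b *m Umx))) g.
    by case: blowup_g; [exists true | exists false].
  by exists (Bmat b); [exact: Bmat_sym | exact/blowupE].
Qed.
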